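(* Let $\pi$ be a set of primes, $G$ a finite group with the property $C_\pi$, $A$ a normal subgroup of $G$ and $H$ a $\pi$-Hall subgroup of $G$. Then both $N_G(HA)$ and $N_G(H\cap A)$ have the property $C_\pi$.
   Context: All groups are finite. A subgroup $H$ of $G$ is a $\pi$-Hall subgroup if all prime divisors of $|H|$ lie in $\pi$ and no prime divisor of $|G:H|$ lies in $\pi$. $G$ has the property $E_\pi$ if it contains a $\pi$-Hall subgroup; $G$ has the property $C_\pi$ if it has $E_\pi$ and any two $\pi$-Hall subgroups of $G$ are conjugate in $G$. *)

From mathcomp Require Import all_boot all_fingroup all_solvable.
Set Implicit Arguments. Unset Strict Implicit. Unset Printing Implicit Defensive.
Local Open Scope group_scope.

Definition E_prop (gT : finGroupType) (pi : nat_pred) (G : {group gT}) : Prop :=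
  exists H : {group gT}, pi.-Hall(G) H.

Definition C_prop (gT : finGroupType) (pi : nat_pred) (G : {group gT}) : Prop :=
  E_prop pi G /\
  forall H K : {group gT}, pi.-Hall(G) H -> pi.-Hall(G) K ->
    exists2 x, x \in G & K :=: H :^ x.

From mathcomp Require Import all_boot all_fingroup all_solvable.
Set Implicit Arguments. Unset Strict Implicit.
Local Open Scope group_scope.

(* Both normalisers
   M = 'N_G(H * A) and M = 'N_G(H :&: A) contain H, so E_pi holds for them;
   the point is conjugacy.  A pi-Hall subgroup of M containing H is pi-Hall in
   G, so it equals H :^ g for some g in G, and it suffices to show that
   H :^ g \subset M forces g \in M (lemma [C_prop_sub]).
   - For H * A: a pi-Hall subgroup K of G normalising a subgroup L that
     contains a pi-Hall subgroup of G lies in L (K :&: L is pi-Hall in L, so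
     it is as large as K).  Hence H :^ g \subset H * A, so
     (H * A) :^ g = H :^ g * A \subset H * A and g normalises H * A.
   - For H :&: A: the pi-group H :&: A is normalised by, hence permutes with,
     the maximal pi-subgroup H :^ g, so it is contained in it; as A :^ g = A,
     H :&: A \subset (H :&: A) :^ g, so g normalises H :&: A. *)

Lemma conj_sub_norm (gT : finGroupType) (B : {set gT}) x :
  B :^ x \subset B -> x \in 'N(B).
Proof. by move=> sBxB; apply/normP/eqP; rewrite eqEcard sBxB cardJg leqnn. Qed.

Lemma pHall_trans (gT : finGroupType) pi (G M H K : {group gT}) :
  H \subset M -> M \subset G -> pi.-Hall(G) H -> pi.-Hall(M) K ->
  pi.-Hall(G) K.
Proof.
move=> sHM sMG hallH hallK; rewrite pHallE (subset_trans (pHall_sub hallK) sMG) /=.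
by rewrite (card_Hall hallK) -(card_Hall (pHall_subl sHM sMG hallH)) (card_Hall hallH).
Qed.

Lemma C_prop_sub (gT : finGroupType) pi (G M H : {group gT}) :
  C_prop pi G -> pi.-Hall(G) H -> H \subset M -> M \subset G ->
  {in G, forall g, H :^ g \subset M -> g \in M} -> C_prop pi M.
Proof.
move=> [_ conjG] hallH sHM sMG closedM; split; first by exists H; apply: pHall_subl hallH.
have conjM (K : {group gT}) : pi.-Hall(M) K -> exists2 g, g \in M & K :=: H :^ g.
  move=> hallK; have [g Gg defK] := conjG _ _ hallH (pHall_trans sHM sMG hallH hallK).
  by exists g => //; apply: closedM; rewrite // -defK (pHall_sub hallK).
move=> K1 K2 /conjM[g1 Mg1 ->] /conjM[g2 Mg2 ->].
by exists (g1^-1 * g2); rewrite ?groupM ?groupV // conjsgM conjsgK.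
Qed.

Lemma pHall_norm_sub (gT : finGroupType) pi (G L H K : {group gT}) :
  pi.-Hall(G) H -> pi.-Hall(G) K -> H \subset L -> L \subset G ->
  K \subset 'N(L) -> K \subset L.
Proof.
move=> hallH hallK sHL sLG nLK.
have sKLG : K <*> L \subset G by rewrite join_subG (pHall_sub hallK).
have hallKL : pi.-Hall(L) (K :&: L).
  apply: (@Hall_setI_normal _ _ (K <*> L)%G); first by rewrite normalYr.
  exact: pHall_subl (joing_subl K L) sKLG hallK.
have eqKL : #|K :&: L| = #|K|.
  by rewrite (card_Hall hallKL) -(card_Hall (pHall_subl sHL sLG hallH))
     (card_Hall hallH) (card_Hall hallK).
have /eqP <- : K :&: L == K by rewrite eqEcard subsetIl eqKL leqnn.
exact: subsetIr.
Qed.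

Section NormalisersOfHallSubgroup.

Variables (gT : finGroupType) (pi : nat_pred) (G A H : {group gT}).
Hypotheses (nsAG : A <| G) (hallH : pi.-Hall(G) H).

Lemma conj_into_norm_mul g : g \in G -> H :^ g \subset 'N(H * A) -> g \in 'N(H * A).
Proof.
move=> Gg nHAHg; have nAG := normal_norm nsAG; have sHG := pHall_sub hallH.
have defHA : H * A = H <*> A by rewrite norm_joinEl ?(subset_trans sHG).
have sHgHA : H :^ g \subset H * A.
  rewrite defHA; apply: (@pHall_norm_sub _ pi G _ H (H :^ g)%G hallH).
  - by rewrite pHallJ.
  - exact: joing_subl.
  - by rewrite join_subG sHG normal_sub.
  - by move: nHAHg; rewrite defHA.
apply: conj_sub_norm; rewrite conjsMg (normsP nAG g Gg).
by rewrite mulSG.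
Qed.

Lemma conj_into_norm_meet g : g \in G -> H :^ g \subset 'N(H :&: A) -> g \in 'N(H :&: A).
Proof.
move=> Gg nHAHg; have nAG := normal_norm nsAG; have sHG := pHall_sub hallH.
have hallHg : pi.-Hall(G) (H :^ g) by rewrite pHallJ.
have piHA : pi.-group (H :&: A) := pgroupS (subsetIl H A) (pHall_pgroup hallH).
have sHAG : H :&: A \subset G := subset_trans (subsetIl H A) sHG.
have sHAHg : H :&: A \subset H :^ g.
  exact: comm_sub_max_pgroup (Hall_max hallHg) piHA sHAG (esym (normC nHAHg)).
rewrite -groupV; apply: conj_sub_norm.
by rewrite sub_conjgV conjIg (normsP nAG g Gg) subsetI sHAHg subsetIr.
Qed.

End NormalisersOfHallSubgroup.

Theorem lemma5 (gT : finGroupType) (pi : nat_pred) (G A H : {group gT}) :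
  C_prop pi G -> A <| G -> pi.-Hall(G) H ->
  C_prop pi 'N_G(H * A)%G /\ C_prop pi 'N_G(H :&: A)%G.
Proof.
move=> CG nsAG hallH; have sHG := pHall_sub hallH.
have nAH : H \subset 'N(A) := subset_trans sHG (normal_norm nsAG).
split; apply: (C_prop_sub CG hallH); rewrite ?subsetIl //.
- by rewrite subsetI sHG normsM ?normG.
- move=> g Gg; rewrite subsetI => /andP[_ nHAHg].
  by rewrite inE Gg (conj_into_norm_mul nsAG hallH Gg nHAHg).
- by rewrite subsetI sHG normsI ?normG.
- move=> g Gg; rewrite subsetI => /andP[_ nHAHg].
  by rewrite inE Gg (conj_into_norm_meet nsAG hallH Gg nHAHg).
Qed.
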